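(* Assume that $f_a(0)=\lim_{u\downarrow0}f_a(u)$ is finite for every $a\in A$. Let $\theta\in\mathbb R^n$ and $p^*\in\mathcal M_1^+(A)$ with $I(p^* )-\sum_j\theta_j\langle p^*,H_j\rangle$ finite. The following are equivalent: (1) $p^*$ satisfies the variational principle with parameters $\theta$; (2) there exist $\alpha\in\mathbb R$ and a subset $A_0\subseteq A$ such that (i) $f_a(p^*_a)=-\alpha-\sum_{j=1}^n\theta_jH_j(a)$ for all $a\in A\setminus A_0$; (ii) $p^*_a=0$ for all $a\in A_0$; (iii) $f_a(0)+\sum_{j=1}^n\theta_jH_j(a)\ge-\alpha$ for all $a\in A_0$.
   Context: Let $A$ be a finite or countable set and $\mathcal M_1^+(A)$ the set of probability distributions $p=(p_a)_{a\in A}$ on $A$. For each $a\in A$ let $h_a:[0,1]\to\mathbb R$ be continuous and strictly concave with $h_a(0)=h_a(1)=0$, differentiable on $(0,1)$ with $h_a'(u)=-f_a(u)$, where $f_a$ extends to a continuous (necessarily strictly increasing) function on $(0,1]$; put $f_a(0)=\lim_{u\downarrow0}f_a(u)\in[-\infty,\infty)$. The generalised entropy is $I(p)=\sum_{a\in A}h_a(p_a)\in[0,+\infty]$. Let $H_1,\dots,H_n:A\to\mathbb R$ be functions bounded from below, and write $\langle p,X\rangle=\sum_{a}p_aX(a)$. A distribution $p^*\in\mathcal M_1^+(A)$ satisfies the variational principle with parameters $\theta=(\theta_1,\dots,\theta_n)\in\mathbb R^n$ if $+\infty> I(p^* )-\sum_{j=1}^n\theta_j\langle p^*,H_j\rangle\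 \ge\ I(p)-\sum_{j=1}^n\theta_j\langle p,H_j\rangle$ for all $p\in\mathcal M_1^+(A)$. *)

From Stdlib Require Import Reals Lra List ClassicalEpsilon.
Open Scope R_scope.

Inductive ER := Fin (r : R) | PInf | MInf.

Definition ele (x y : ER) : Prop :=
  match x, y with
  | MInf, _ => True
  | _, PInf => True
  | Fin a, Fin b => a <= b
  | _, _ => False
  end.

Definition eadd (x y : ER) : option ER :=
  match x, y with
  | Fin a, Fin b => Some (Fin (a + b))
  | PInf, MInf | MInf, PInf => None
  | PInf, _ | _, PInf => Some PInf
  | MInf, _ | _, MInf => Some MInf
  end.

Definition eopp (x : ER) : ER :=
  match x with Fin a => Fin (- a) | PInf => MInf | MInf => PInf end.

(** Scalar multiple, with the convention 0 * (+-oo) = 0. *)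
Definition escal (c : R) (x : ER) : ER :=
  match x with
  | Fin a => Fin (c * a)
  | PInf => match Rlt_dec 0 c with left _ => PInf | right _ =>
              match Rlt_dec c 0 with left _ => MInf | right _ => Fin 0 end end
  | MInf => match Rlt_dec 0 c with left _ => MInf | right _ =>
              match Rlt_dec c 0 with left _ => PInf | right _ => Fin 0 end end
  end.

Definition fsum {A : Type} (g : A -> R) (l : list A) : R :=
  fold_right (fun a acc => g a + acc) 0 l.

Definition psums {A : Type} (g : A -> R) : R -> Prop :=
  fun x => exists l : list A, NoDup l /\ x = fsum g l.

Lemma psums_ne {A : Type} (g : A -> R) : exists x, psums g x.
Proof. exists 0. exists nil. split; [constructor | reflexivity]. Qed.

Definition sum_nn {A : Type} (g : A -> R) : ER :=
  match excluded_middle_informative (bound (psums g)) with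
  | left Hb => Fin (proj1_sig (completeness (psums g) Hb (psums_ne g)))
  | right _ => PInf
  end.

(** <p, X> = sum_a p_a X(a), as (positive part) - (negative part);
    [None] if both parts are infinite. *)
Definition inner {A : Type} (p X : A -> R) : option ER :=
  eadd (sum_nn (fun a => Rmax (p a * X a) 0))
       (eopp (sum_nn (fun a => Rmax (- (p a * X a)) 0))).

Definition sumj (n : nat) (g : nat -> R) : R :=
  fold_right (fun j acc => g j + acc) 0 (seq 0 n).

Definition is_prob {A : Type} (p : A -> R) : Prop :=
  (forall a, 0 <= p a) /\ sum_nn p = Fin 1.

Definition gen_entropy {A : Type} (h : A -> R -> R) (p : A -> R) : ER :=
  sum_nn (fun a => h a (p a)).

(** I(p) - sum_{j<n} theta_j <p, H_j>, [None] when undefined (oo - oo). *)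
Definition objective {A : Type} (h : A -> R -> R) (n : nat)
    (theta : nat -> R) (H : nat -> A -> R) (p : A -> R) : option ER :=
  fold_right
    (fun j acc =>
       match acc, inner p (H j) with
       | Some x, Some y => eadd x (escal (- theta j) y)
       | _, _ => None
       end)
    (Some (gen_entropy h p)) (seq 0 n).

Definition variational_principle {A : Type} (h : A -> R -> R) (n : nat)
    (theta : nat -> R) (H : nat -> A -> R) (pstar : A -> R) : Prop :=
  is_prob pstar /\
  exists r : R, objective h n theta H pstar = Some (Fin r) /\
    forall p : A -> R, is_prob p ->
      forall v : ER, objective h n theta H p = Some v -> ele v (Fin r).

Definition entropy_fun (h f : R -> R) : Prop :=
  (forall x, 0 <= x <= 1 -> limit1_in h (fun y => 0 <= y <= 1) (h x) x) /\
  (forall x y t, 0 <= x <= 1 -> 0 <= y <= 1 -> x <> y -> 0 < t < 1 ->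
     t * h x + (1 - t) * h y < h (t * x + (1 - t) * y)) /\
  h 0 = 0 /\ h 1 = 0 /\
  (forall u, 0 < u < 1 -> derivable_pt_lim h u (- f u)) /\
  (forall u, 0 < u <= 1 -> limit1_in f (fun y => 0 < y <= 1) (f u) u).

Definition finite_limit_at_0 (f : R -> R) : Prop :=
  limit1_in f (fun y => 0 < y <= 1) (f 0) 0.

(** Write W(a) = sum_j theta_j H_j(a).  The proof rests on the tangent inequality
    h_a(x) <= h_a(y) - f_a(y) (x - y) for all x, y in [0,1] (concavity plus
    h_a' = -f_a, extended to the endpoints by continuity of h_a and of f_a, the
    latter using the finiteness of f_a(0)).
    - (2) => (1): by the tangent inequality at p*_a and conditions (i)-(iii),
      h_a(p_a) - h_a(p*_a) <= (alpha + W(a)) (p_a - p*_a) for every a; summing over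
      A, and using that p and p* both have mass 1, gives that the objective of p is
      at most that of p*.
    - (1) => (2): moving a mass e from a point b of the support of p* to another
      point a cannot increase the objective; with the tangent inequality this gives
      f_b(p*_b - e) - f_a(p*_a + e) <= W(a) - W(b), and letting e -> 0 shows that
      f_a(p*_a) + W(a) is minimal, equal to -alpha, on the support of p*. *)

From Stdlib Require Import Reals Lra List Classical ClassicalEpsilon FunctionalExtensionality.
Open Scope R_scope.

Lemma limit1_in_le (g : R -> R) D l x0 c :
  adhDa D x0 -> limit1_in g D l x0 -> (forall x, D x -> g x <= c) -> l <= c.
Proof.
  intros Hadh Hlim Hle. apply Rnot_lt_le; intro Hc.
  destruct (Hlim (l - c)) as [alp [Halp Hnear]]; [lra|].
  destruct (Hadh alp Halp) as [x [Dx Hx]].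
  assert (Hg : Rabs (g x - l) < l - c) by (apply (Hnear x); split; auto).
  apply Rabs_def2 in Hg. specialize (Hle x Dx). lra.
Qed.

Lemma limit1_in_sub (g : R -> R) (D D' : R -> Prop) l x0 :
  (forall x, D' x -> D x) -> limit1_in g D l x0 -> limit1_in g D' l x0.
Proof.
  intros Hsub Hlim eps Heps. destruct (Hlim eps Heps) as [alp [Halp Hnear]].
  exists alp; split; auto. intros x [Dx Hx]. apply Hnear; auto.
Qed.

Lemma limit1_in_translate (g : R -> R) D l y s :
  Rabs s = 1 -> limit1_in g D l y ->
  limit1_in (fun e => g (y + s * e)) (fun e => D (y + s * e)) l 0.
Proof.
  intros Hs Hlim eps Heps. destruct (Hlim eps Heps) as [alp [Halp Hnear]].
  exists alp; split; auto. intros e [De He]. apply Hnear. split; auto.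
  simpl in *. unfold Rdist in *.
  replace (y + s * e - y) with (s * (e - 0)) by ring. rewrite Rabs_mult, Hs. lra.
Qed.

Lemma adherent_interval a b y : a < b -> a <= y <= b -> adhDa (fun x => a < x < b) y.
Proof.
  intros Hab Hy alp Halp.
  set (t := Rmin (1/2) (alp / (b - a))).
  assert (Ht : 0 < t <= 1/2 /\ t <= alp / (b - a)).
  { unfold t. split; [split|]; [apply Rmin_pos; [lra| apply Rdiv_lt_0_compat; lra]
      | apply Rmin_l | apply Rmin_r]. }
  assert (Hta : t * (b - a) <= alp).
  { destruct Ht as [_ Ht]. apply (Rmult_le_compat_r (b - a)) in Ht; [|lra].
    replace (alp / (b - a) * (b - a)) with alp in Ht by (field; lra). lra. }
  exists (y + t * ((a + b) / 2 - y)). split; [split; nra|].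
  simpl. unfold Rdist. replace (y + t * ((a + b) / 2 - y) - y) with (t * ((a + b) / 2 - y)) by ring.
  rewrite Rabs_mult, Rabs_pos_eq by lra.
  assert (Rabs ((a + b) / 2 - y) <= (b - a) / 2) by (apply Rabs_le; lra). nra.
Qed.

Lemma derivative_ge_slope_bound (g : R -> R) y l d c :
  derivable_pt_lim g y l ->
  (forall t, 0 < t < 1 -> c <= (g (y + t * d) - g y) / t) -> c <= l * d.
Proof.
  intros Hder Hslope.
  destruct (Req_dec d 0) as [->|Hd].
  { specialize (Hslope (1/2) ltac:(lra)). rewrite Rmult_0_r, Rplus_0_r, Rminus_diag in Hslope.
    unfold Rdiv in Hslope. lra. }
  assert (Hd' : 0 < Rabs d) by (apply Rabs_pos_lt; auto).
  apply Rle_plus_epsilon. intros eps Heps.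
  destruct (Hder (eps / Rabs d)) as [delta Hdelta]; [apply Rdiv_lt_0_compat; lra|].
  pose proof (cond_pos delta) as Hdel.
  set (t := Rmin (1/2) (delta / (2 * Rabs d))).
  assert (Ht : 0 < t <= 1/2 /\ t <= delta / (2 * Rabs d)).
  { unfold t. split; [split|]; [apply Rmin_pos; [lra| apply Rdiv_lt_0_compat; lra]
      | apply Rmin_l | apply Rmin_r]. }
  assert (Htd : Rabs (t * d) < delta).
  { rewrite Rabs_mult, (Rabs_pos_eq t) by lra. destruct Ht as [_ Ht].
    apply (Rmult_le_compat_r (Rabs d)) in Ht; [|lra].
    replace (delta / (2 * Rabs d) * Rabs d) with (delta / 2) in Ht by (field; lra). lra. }
  assert (Htd0 : t * d <> 0) by (apply Rmult_integral_contrapositive; split; lra).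
  specialize (Hdelta (t * d) Htd0 Htd). specialize (Hslope t ltac:(lra)).
  set (q := (g (y + t * d) - g y) / (t * d)) in Hdelta.
  assert (Hq : (g (y + t * d) - g y) / t = d * q) by (unfold q; field; lra).
  assert (Hdq : Rabs (d * q - l * d) < eps).
  { replace (d * q - l * d) with (d * (q - l)) by ring. rewrite Rabs_mult.
    apply (Rmult_lt_compat_l (Rabs d)) in Hdelta; [|lra].
    replace (Rabs d * (eps / Rabs d)) with eps in Hdelta by (field; lra). lra. }
  apply Rabs_def2 in Hdq. lra.
Qed.

Section EntropyFunction.
Variables (h f : R -> R).
Hypothesis hf : entropy_fun h f.

Lemma entropy_concave x y t : 0 <= x <= 1 -> 0 <= y <= 1 -> 0 < t < 1 ->
  t * h x + (1 - t) * h y <= h (t * x + (1 - t) * y).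
Proof.
  destruct hf as [_ [Hconc _]]. intros Hx Hy Ht.
  destruct (Req_dec x y) as [<-|Hxy].
  - replace (t * x + (1 - t) * x) with x by ring. lra.
  - apply Rlt_le, Hconc; auto.
Qed.

(** h >= 0 on [0,1], from concavity and h(0) = h(1) = 0. *)
Lemma entropy_nonneg x : 0 <= x <= 1 -> 0 <= h x.
Proof.
  destruct hf as [_ [_ [Hh0 [Hh1 _]]]]. intros Hx.
  destruct (Req_dec x 0) as [->|Hx0]; [lra|]. destruct (Req_dec x 1) as [->|Hx1]; [lra|].
  pose proof (entropy_concave 1 0 x ltac:(lra) ltac:(lra) ltac:(lra)) as Hc.
  rewrite Hh0, Hh1 in Hc. replace (x * 1 + (1 - x) * 0) with x in Hc by ring. lra.
Qed.

(** Tangent inequality at an interior point: concavity + h' = -f. *)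
Lemma tangent_interior x y : 0 < y < 1 -> 0 <= x <= 1 -> h x <= h y - f y * (x - y).
Proof.
  destruct hf as [_ [_ [_ [_ [Hder _]]]]]. intros Hy Hx.
  enough (h x - h y <= - f y * (x - y)) by lra.
  apply (derivative_ge_slope_bound h y (- f y) (x - y)); [apply Hder; auto|].
  intros t Ht. apply (Rmult_le_reg_r t); [lra|]. unfold Rdiv. rewrite Rmult_assoc, Rinv_l by lra.
  pose proof (entropy_concave x y t Hx ltac:(lra) Ht) as Hc.
  replace (t * x + (1 - t) * y) with (y + t * (x - y)) in Hc by ring. lra.
Qed.

Hypothesis f0 : finite_limit_at_0 f.

Lemma f_continuous y : 0 <= y <= 1 -> limit1_in f (fun z => 0 < z <= 1) (f y) y.
Proof.
  destruct hf as [_ [_ [_ [_ [_ Hfc]]]]]. intros Hy.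
  destruct (Req_dec y 0) as [->|Hy0]; [apply f0| apply Hfc; lra].
Qed.

(** Tangent inequality at every point of [0,1], by letting the interior
    point tend to y. *)
Lemma tangent x y : 0 <= y <= 1 -> 0 <= x <= 1 -> h x <= h y - f y * (x - y).
Proof.
  destruct hf as [Hhc _]. intros Hy Hx.
  set (D := fun z => 0 < z < 1).
  assert (Hh : limit1_in h D (h y) y)
    by (apply (limit1_in_sub _ (fun z => 0 <= z <= 1)); [unfold D; intros; lra| auto]).
  assert (Hf : limit1_in f D (f y) y)
    by (apply (limit1_in_sub _ (fun z => 0 < z <= 1)); [unfold D; intros; lra| apply f_continuous; auto]).
  assert (Hlin : limit1_in (fun z => x - z) D (x - y) y)
    by exact (limit_minus _ _ _ _ _ _ (limit_free (fun _ => x) D x y) (lim_x D y)).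
  pose proof (limit_plus _ _ _ _ _ _ (limit_minus _ _ _ _ _ _ (limit_free (fun _ => h x) D x y) Hh)
                (limit_mul _ _ _ _ _ _ Hf Hlin)) as Hlim.
  enough (h x - h y + f y * (x - y) <= 0) by lra.
  apply (limit1_in_le _ D _ y _ (adherent_interval 0 1 y ltac:(lra) Hy) Hlim).
  intros z Hz. pose proof (tangent_interior x z Hz Hx). lra.
Qed.

End EntropyFunction.

(** Sum of two values in [0, +oo] (the only case needed: no [MInf]). *)
Definition eplus (x y : ER) : ER :=
  match x, y with Fin a, Fin b => Fin (a + b) | _, _ => PInf end.

Definition shift (d : R) (x : ER) : ER := match x with Fin s => Fin (s + d) | _ => x end.

Lemma escal_zero x : escal 0 x = Fin 0.
Proof.
  destruct x; simpl; [f_equal; ring| |];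
    destruct (Rlt_dec 0 0); try lra; destruct (Rlt_dec 0 0); auto; lra.
Qed.

Section NonnegSums.
Context {A : Type}.

Lemma fsum_le (g1 g2 : A -> R) l : (forall a, g1 a <= g2 a) -> fsum g1 l <= fsum g2 l.
Proof. intros Hg; induction l as [|a l IH]; simpl; [lra| specialize (Hg a); lra]. Qed.

Lemma fsum_plus (g1 g2 : A -> R) l : fsum (fun a => g1 a + g2 a) l = fsum g1 l + fsum g2 l.
Proof. induction l; simpl; lra. Qed.

Lemma fsum_scal c (g : A -> R) l : fsum (fun a => c * g a) l = c * fsum g l.
Proof. induction l as [|a l IH]; simpl; [ring| rewrite IH; ring]. Qed.

Lemma fsum_nonneg (g : A -> R) l : (forall a, 0 <= g a) -> 0 <= fsum g l.
Proof. intros Hg; induction l as [|a l IH]; simpl; [lra| specialize (Hg a); lra]. Qed.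

Lemma fsum_app (g : A -> R) l1 l2 : fsum g (l1 ++ l2) = fsum g l1 + fsum g l2.
Proof. induction l1; simpl; lra. Qed.

Lemma fsum_incl (g : A -> R) l1 l : (forall a, 0 <= g a) -> NoDup l1 -> NoDup l ->
  incl l1 l -> fsum g l1 <= fsum g l.
Proof.
  intros Hg. revert l. induction l1 as [|x l1 IH]; intros l N1 N Hi; simpl.
  - apply fsum_nonneg; auto.
  - assert (Hx : In x l) by (apply Hi; left; auto).
    destruct (in_split _ _ Hx) as [u [v ->]].
    inversion N1 as [|? ? Hx1 N1']; subst.
    assert (Nuv : NoDup (u ++ v)) by (eapply NoDup_remove_1; eauto).
    assert (Hi' : incl l1 (u ++ v)).
    { intros y Hy. assert (Hy' : In y (u ++ x :: v)) by (apply Hi; right; auto).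
      apply in_app_or in Hy'. apply in_or_app.
      destruct Hy' as [Hy'|[<-|Hy']]; auto; contradiction. }
    specialize (IH _ N1' Nuv Hi'). rewrite fsum_app in *. simpl. lra.
Qed.

Lemma nodup_common_superlist (l1 l2 : list A) : NoDup l1 -> NoDup l2 ->
  exists l, NoDup l /\ incl l1 l /\ incl l2 l.
Proof.
  revert l1. induction l2 as [|x l2 IH]; intros l1 N1 N2.
  - exists l1. split; auto. split; [apply incl_refl| intros y []].
  - inversion N2 as [|? ? Hx2 N2']; subst.
    destruct (classic (In x l1)) as [Hx|Hx].
    + destruct (IH l1 N1 N2') as [l [N [I1 I2]]].
      exists l. split; [auto| split; [auto| intros y [<-|Hy]; auto]].
    + destruct (IH (x :: l1)) as [l [N [I1 I2]]]; [constructor; auto| auto|].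
      exists l. split; [auto| split].
      * intros y Hy. apply I1. right; auto.
      * intros y [<-|Hy]; auto. apply I1; left; auto.
Qed.

Lemma sum_nn_spec (g : A -> R) :
  (exists s, sum_nn g = Fin s /\ is_lub (psums g) s) \/
  (~ bound (psums g) /\ sum_nn g = PInf).
Proof.
  unfold sum_nn. destruct excluded_middle_informative as [Hb|Hb].
  - left. destruct (completeness (psums g) Hb (psums_ne g)) as [s Hs]. simpl. eauto.
  - right. auto.
Qed.

Lemma sum_nn_Fin (g : A -> R) s : is_lub (psums g) s -> sum_nn g = Fin s.
Proof.
  intros Hs. destruct (sum_nn_spec g) as [[s' [E Hs']]|[Nb E]].
  - rewrite E. f_equal. eapply is_lub_u; eauto.
  - exfalso. apply Nb. exists s. apply Hs.
Qed.

Lemma sum_nn_PInf (g : A -> R) : ~ bound (psums g) -> sum_nn g = PInf.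
Proof.
  intros Nb. destruct (sum_nn_spec g) as [[s [E Hs]]|[_ E]]; auto.
  exfalso. apply Nb. exists s. apply Hs.
Qed.

Lemma sum_nn_Fin_lub (g : A -> R) s : sum_nn g = Fin s -> is_lub (psums g) s.
Proof.
  intros E. destruct (sum_nn_spec g) as [[s' [E' Hs']]|[_ E']];
    rewrite E' in E; inversion E; subst; auto.
Qed.

Lemma sum_nn_not_MInf (g : A -> R) : sum_nn g <> MInf.
Proof. destruct (sum_nn_spec g) as [[s [E _]]|[_ E]]; rewrite E; discriminate. Qed.

Lemma sum_nn_mono (g1 g2 : A -> R) : (forall a, g1 a <= g2 a) -> ele (sum_nn g1) (sum_nn g2).
Proof.
  intros Hg. destruct (sum_nn_spec g2) as [[s2 [E2 Lub2]]|[_ E2]]; rewrite E2.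
  - assert (Hu : is_upper_bound (psums g1) s2).
    { intros x [l [N ->]]. apply Rle_trans with (fsum g2 l); [apply fsum_le; auto|].
      apply Lub2. exists l; auto. }
    destruct (sum_nn_spec g1) as [[s1 [E1 Lub1]]|[Nb E1]]; rewrite E1.
    + apply Lub1; auto.
    + exfalso. apply Nb. exists s2. auto.
  - destruct (sum_nn g1); simpl; auto.
Qed.

Lemma sum_nn_PInf_mono (g1 g2 : A -> R) :
  (forall a, g1 a <= g2 a) -> sum_nn g1 = PInf -> sum_nn g2 = PInf.
Proof.
  intros Hg E. pose proof (sum_nn_mono g1 g2 Hg) as M. rewrite E in M.
  pose proof (sum_nn_not_MInf g2). destruct (sum_nn g2); simpl in M; tauto.
Qed.

Lemma sum_nn_add (g1 g2 : A -> R) : (forall a, 0 <= g1 a) -> (forall a, 0 <= g2 a) ->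
  sum_nn (fun a => g1 a + g2 a) = eplus (sum_nn g1) (sum_nn g2).
Proof.
  intros P1 P2.
  destruct (sum_nn_spec g1) as [[s1 [E1 Lub1]]|[_ E1]];
  [destruct (sum_nn_spec g2) as [[s2 [E2 Lub2]]|[_ E2]]|]; rewrite E1; try rewrite E2; simpl.
  - apply sum_nn_Fin. split.
    + intros x [l [N ->]]. rewrite fsum_plus.
      assert (fsum g1 l <= s1) by (apply Lub1; exists l; auto).
      assert (fsum g2 l <= s2) by (apply Lub2; exists l; auto). lra.
    + intros M HM.
      assert (Hsplit : forall l1 l2, NoDup l1 -> NoDup l2 -> fsum g1 l1 + fsum g2 l2 <= M).
      { intros l1 l2 N1 N2. destruct (nodup_common_superlist l1 l2 N1 N2) as [l [N [I1 I2]]].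
        assert (fsum g1 l1 <= fsum g1 l) by (apply fsum_incl; auto).
        assert (fsum g2 l2 <= fsum g2 l) by (apply fsum_incl; auto).
        assert (Hl : fsum (fun a => g1 a + g2 a) l <= M) by (apply HM; exists l; auto).
        rewrite fsum_plus in Hl. lra. }
      assert (Hs1 : forall l2, NoDup l2 -> s1 <= M - fsum g2 l2).
      { intros l2 N2. apply Lub1. intros x [l1 [N1 ->]]. specialize (Hsplit l1 l2 N1 N2). lra. }
      assert (s2 <= M - s1).
      { apply Lub2. intros x [l2 [N2 ->]]. specialize (Hs1 l2 N2). lra. }
      lra.
  - apply (sum_nn_PInf_mono g2); auto. intros a. specialize (P1 a). lra.
  - apply (sum_nn_PInf_mono g1); auto. intros a. specialize (P2 a). lra.
Qed.

Lemma sum_nn_zero : sum_nn (fun _ : A => 0) = Fin 0.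
Proof.
  apply sum_nn_Fin. split.
  - intros x [l [_ ->]]. induction l; simpl; lra.
  - intros M HM. apply HM. exists nil. split; [constructor|reflexivity].
Qed.

Lemma sum_nn_scal c (g : A -> R) : 0 <= c ->
  sum_nn (fun a => c * g a) = escal c (sum_nn g).
Proof.
  intros Hc. destruct (Req_dec c 0) as [->|Hc0].
  { replace (fun a => 0 * g a) with (fun _ : A => 0)
      by (apply functional_extensionality; intros; ring).
    rewrite sum_nn_zero, escal_zero. reflexivity. }
  assert (Hcpos : 0 < c) by lra.
  assert (Hub : forall M, is_upper_bound (psums (fun a => c * g a)) M ->
                          is_upper_bound (psums g) (M / c)).
  { intros M HM x [l [N ->]].
    assert (c * fsum g l <= M) by (rewrite <- fsum_scal; apply HM; exists l; auto).
    apply (Rmult_le_reg_l c); auto. field_simplify; lra. }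
  destruct (sum_nn_spec g) as [[s [E Hs]]|[Nb E]]; rewrite E; simpl.
  - apply sum_nn_Fin. split.
    + intros x [l [N ->]]. rewrite fsum_scal. apply Rmult_le_compat_l; [lra|].
      apply Hs. exists l; auto.
    + intros M HM. assert (Hsc : s <= M / c) by (apply Hs, Hub, HM).
      apply (Rmult_le_compat_l c) in Hsc; [|lra].
      replace (c * (M / c)) with M in Hsc by (field; lra). exact Hsc.
  - destruct Rlt_dec; [|lra]. apply sum_nn_PInf. intros [M HM]. apply Nb. exists (M / c).
    apply Hub, HM.
Qed.

Lemma fsum_out (g g' : A -> R) a l : (forall x, x <> a -> g' x = g x) -> ~ In a l ->
  fsum g' l = fsum g l.
Proof.
  intros Hg. induction l as [|x l IH]; simpl; auto. intros Hn.
  rewrite IH by tauto. rewrite Hg; auto.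
Qed.

Lemma fsum_in (g g' : A -> R) a l : (forall x, x <> a -> g' x = g x) -> NoDup l -> In a l ->
  fsum g' l = fsum g l + (g' a - g a).
Proof.
  intros Hg. induction l as [|x l IH]; simpl; [tauto|].
  intros N [E|Hi]; inversion N as [|? ? Hx N']; subst.
  - rewrite (fsum_out g g' a) by auto. lra.
  - assert (x <> a) by (intro; subst; contradiction). rewrite Hg, IH by auto. lra.
Qed.

Lemma sum_nn_update (g g' : A -> R) a : (forall x, 0 <= g x) -> (forall x, 0 <= g' x) ->
  (forall x, x <> a -> g' x = g x) -> sum_nn g' = shift (g' a - g a) (sum_nn g).
Proof.
  intros P P' Hx.
  assert (T1 : forall M, is_upper_bound (psums g) M ->
                         is_upper_bound (psums g') (M + (g' a - g a))).
  { intros M HM x [l [N ->]]. destruct (classic (In a l)) as [Hi|Hi].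
    - rewrite (fsum_in g g' a) by auto. assert (fsum g l <= M) by (apply HM; exists l; auto). lra.
    - rewrite (fsum_out g g' a) by auto.
      assert (Hl : fsum g (a :: l) <= M) by (apply HM; exists (a :: l); split; auto; constructor; auto).
      simpl in Hl. pose proof (P' a). lra. }
  assert (T2 : forall M, is_upper_bound (psums g') M ->
                         is_upper_bound (psums g) (M - (g' a - g a))).
  { intros M HM x [l [N ->]]. destruct (classic (In a l)) as [Hi|Hi].
    - assert (Hl : fsum g' l <= M) by (apply HM; exists l; auto).
      rewrite (fsum_in g g' a) in Hl by auto. lra.
    - assert (Hl : fsum g' (a :: l) <= M) by (apply HM; exists (a :: l); split; auto; constructor; auto).
      simpl in Hl. rewrite (fsum_out g g' a) in Hl by auto. pose proof (P a). lra. }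
  destruct (sum_nn_spec g) as [[s [E Hs]]|[Nb E]]; rewrite E; simpl.
  - apply sum_nn_Fin. split.
    + apply T1, Hs.
    + intros M HM. assert (s <= M - (g' a - g a)) by (apply Hs, T2, HM). lra.
  - apply sum_nn_PInf. intros [M HM]. apply Nb. exists (M - (g' a - g a)). apply T2; auto.
Qed.

Lemma sum_nn_update2 (g g' : A -> R) a b : a <> b ->
  (forall x, 0 <= g x) -> (forall x, 0 <= g' x) ->
  (forall x, x <> a -> x <> b -> g' x = g x) ->
  sum_nn g' = shift ((g' a - g a) + (g' b - g b)) (sum_nn g).
Proof.
  intros Hab P P' Hx.
  set (g1 := fun x => if excluded_middle_informative (x = a) then g' a else g x).
  assert (Ga : g1 a = g' a) by (unfold g1; destruct excluded_middle_informative; tauto).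
  assert (Gb : g1 b = g b) by (unfold g1; destruct excluded_middle_informative; congruence).
  assert (P1 : forall x, 0 <= g1 x) by (intros x; unfold g1; destruct excluded_middle_informative; auto).
  rewrite (sum_nn_update g1 g' b), (sum_nn_update g g1 a), Ga, Gb; auto.
  - destruct (sum_nn g); simpl; auto. f_equal; ring.
  - intros x Hxa. unfold g1. destruct excluded_middle_informative; tauto.
  - intros x Hxb. unfold g1. destruct excluded_middle_informative; subst; auto.
Qed.

Lemma sum_nn_combination c d (g1 g2 : A -> R) : 0 <= c -> 0 <= d ->
  (forall a, 0 <= g1 a) -> (forall a, 0 <= g2 a) ->
  sum_nn (fun a => c * g1 a + d * g2 a) = eplus (escal c (sum_nn g1)) (escal d (sum_nn g2)).
Proof.
  intros Hc Hd P1 P2.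
  rewrite (sum_nn_add (fun a => c * g1 a) (fun a => d * g2 a)), !sum_nn_scal; auto;
    intros a; [specialize (P1 a)| specialize (P2 a)]; nra.
Qed.

End NonnegSums.
Definition pos_part (x : R) : R := Rmax x 0.

Lemma pos_part_nonneg x : 0 <= pos_part x.
Proof. apply Rmax_r. Qed.

Lemma pos_part_sub x : pos_part x - pos_part (- x) = x.
Proof. unfold pos_part, Rmax. repeat destruct Rle_dec; lra. Qed.

Lemma pos_part_cases t :
  (pos_part t = t /\ pos_part (- t) = 0 /\ 0 < t) \/
  (pos_part t = 0 /\ pos_part (- t) = - t /\ t < 0) \/
  (pos_part t = 0 /\ pos_part (- t) = 0 /\ t = 0).
Proof. unfold pos_part, Rmax. repeat destruct Rle_dec; lra. Qed.

Ltac decide_signs :=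
  repeat match goal with
  | |- context [Rlt_dec ?a ?b] => destruct (Rlt_dec a b); try lra
  | H : context [Rlt_dec ?a ?b] |- _ => destruct (Rlt_dec a b); try lra
  end.

(** Extended-real identity behind the decomposition of the objective:
    if x = X - Y and y = P - N with X, Y, P, N in [0, +oo], then
    x - t y = (X + t^- P + t^+ N) - (Y + t^+ P + t^- N), whenever defined. *)
Lemma eadd_scaled_difference X Y P N x y v t :
  X <> MInf -> Y <> MInf -> P <> MInf -> N <> MInf ->
  eadd X (eopp Y) = Some x -> eadd P (eopp N) = Some y -> eadd x (escal (- t) y) = Some v ->
  eadd (eplus X (eplus (escal (pos_part (- t)) P) (escal (pos_part t) N)))
       (eopp (eplus Y (eplus (escal (pos_part t) P) (escal (pos_part (- t)) N)))) = Some v.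
Proof.
  intros HX HY HP HN E1 E2 E3.
  destruct (pos_part_cases t) as [[A1 [A2 Ht]]|[[A1 [A2 Ht]]|[A1 [A2 Ht]]]]; rewrite A1, A2;
  destruct X, Y, P, N; try congruence; simpl in *; decide_signs;
  inversion E1; inversion E2; subst; simpl in *; decide_signs;
  inversion E3; subst; try reflexivity; f_equal; f_equal; ring.
Qed.

Lemma eadd_shift X Y u w :
  eadd (shift u X) (eopp (shift w Y)) = option_map (shift (u - w)) (eadd X (eopp Y)).
Proof. destruct X, Y; simpl; auto. f_equal; f_equal; ring. Qed.

(** Comparison of two differences of sums of nonnegative families, from a
    pointwise inequality corrected by two families with equal finite sums. *)
Lemma diff_of_sums_le {A : Type} (G1 K1 G2 K2 u w : A -> R) s v r :
  (forall a, 0 <= G1 a) -> (forall a, 0 <= K1 a) -> (forall a, 0 <= G2 a) ->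
  (forall a, 0 <= K2 a) -> (forall a, 0 <= u a) -> (forall a, 0 <= w a) ->
  sum_nn u = Fin s -> sum_nn w = Fin s ->
  (forall a, G1 a + K2 a + u a <= G2 a + K1 a + w a) ->
  eadd (sum_nn G1) (eopp (sum_nn K1)) = Some v ->
  eadd (sum_nn G2) (eopp (sum_nn K2)) = Some (Fin r) -> ele v (Fin r).
Proof.
  intros PG1 PK1 PG2 PK2 Pu Pw Su Sw Hle E1 E2.
  pose proof (sum_nn_mono _ _ Hle) as M.
  rewrite (sum_nn_add (fun a => G1 a + K2 a) u), (sum_nn_add G1 K2),
    (sum_nn_add (fun a => G2 a + K1 a) w), (sum_nn_add G2 K1), Su, Sw in M;
    auto; try (intros a; specialize (PG1 a); specialize (PK2 a);
               specialize (PG2 a); specialize (PK1 a); lra).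
  pose proof (sum_nn_not_MInf G1). pose proof (sum_nn_not_MInf K1).
  pose proof (sum_nn_not_MInf G2). pose proof (sum_nn_not_MInf K2).
  destruct (sum_nn G1), (sum_nn K1), (sum_nn G2), (sum_nn K2); try congruence;
    simpl in *; inversion E1; inversion E2; subst; simpl in *; auto; lra.
Qed.

Section ObjectiveDecomposition.
Context {A : Type} (h : A -> R -> R) (theta : nat -> R) (H : nat -> A -> R).

(** The objective over an arbitrary list of indices, for induction. *)
Definition obj (js : list nat) (p : A -> R) : option ER :=
  fold_right
    (fun j acc =>
       match acc, inner p (H j) with
       | Some x, Some y => eadd x (escal (- theta j) y)
       | _, _ => None
       end)
    (Some (gen_entropy h p)) js.

Lemma objective_obj n p : objective h n theta H p = obj (seq 0 n) p.
Proof. reflexivity. Qed.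

Definition weighted_H (js : list nat) (a : A) : R :=
  fold_right (fun j acc => theta j * H j a + acc) 0 js.

(** Change of the potential term under a transfer of mass e from b to a. *)
Lemma weighted_H_transfer js a b e :
  fold_right (fun j acc => theta j * (e * H j a - e * H j b) + acc) 0 js =
  e * (weighted_H js a - weighted_H js b).
Proof. induction js as [|j js IH]; simpl; [ring| rewrite IH; unfold weighted_H; simpl; ring]. Qed.

(** -theta_j p_a H_j(a) = term_plus - term_minus, both nonnegative. *)
Definition term_plus j (p : A -> R) a : R :=
  pos_part (- theta j) * pos_part (p a * H j a) + pos_part (theta j) * pos_part (- (p a * H j a)).
Definition term_minus j (p : A -> R) a : R :=
  pos_part (theta j) * pos_part (p a * H j a) + pos_part (- theta j) * pos_part (- (p a * H j a)).

Definition obj_plus js (p : A -> R) a : R :=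
  fold_right (fun j acc => acc + term_plus j p a) (h a (p a)) js.
Definition obj_minus js (p : A -> R) a : R :=
  fold_right (fun j acc => acc + term_minus j p a) 0 js.

Lemma term_plus_nonneg j p a : 0 <= term_plus j p a.
Proof.
  unfold term_plus. pose proof (pos_part_nonneg (- theta j)). pose proof (pos_part_nonneg (theta j)).
  pose proof (pos_part_nonneg (p a * H j a)). pose proof (pos_part_nonneg (- (p a * H j a))). nra.
Qed.

Lemma term_minus_nonneg j p a : 0 <= term_minus j p a.
Proof.
  unfold term_minus. pose proof (pos_part_nonneg (- theta j)). pose proof (pos_part_nonneg (theta j)).
  pose proof (pos_part_nonneg (p a * H j a)). pose proof (pos_part_nonneg (- (p a * H j a))). nra.
Qed.

Lemma obj_plus_nonneg js p : (forall a, 0 <= h a (p a)) -> forall a, 0 <= obj_plus js p a.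
Proof.
  intros Hh a. induction js as [|j js IH]; simpl; auto. pose proof (term_plus_nonneg j p a). lra.
Qed.

Lemma obj_minus_nonneg js p a : 0 <= obj_minus js p a.
Proof. induction js as [|j js IH]; simpl; [lra|]. pose proof (term_minus_nonneg j p a). lra. Qed.

Lemma obj_plus_minus js p a :
  obj_plus js p a - obj_minus js p a = h a (p a) - p a * weighted_H js a.
Proof.
  induction js as [|j js IH]; simpl; [ring|].
  assert (E : term_plus j p a - term_minus j p a = - theta j * (p a * H j a)).
  { unfold term_plus, term_minus.
    pose proof (pos_part_sub (theta j)). pose proof (pos_part_sub (p a * H j a)).
    replace (pos_part (- theta j)) with (pos_part (theta j) - theta j) by lra.
    replace (pos_part (p a * H j a)) with (pos_part (- (p a * H j a)) + p a * H j a) by lra.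
    ring. }
  replace (obj_plus js p a + term_plus j p a - (obj_minus js p a + term_minus j p a))
    with ((obj_plus js p a - obj_minus js p a) + (term_plus j p a - term_minus j p a)) by ring.
  rewrite IH, E. unfold weighted_H. ring.
Qed.

Lemma obj_decompose p : (forall a, 0 <= h a (p a)) -> forall js v, obj js p = Some v ->
  eadd (sum_nn (obj_plus js p)) (eopp (sum_nn (obj_minus js p))) = Some v.
Proof.
  intros Hh js. induction js as [|j js IH]; intros v Ev.
  - simpl in Ev. inversion Ev; subst. unfold obj_minus, obj_plus, gen_entropy; simpl.
    rewrite sum_nn_zero. pose proof (sum_nn_not_MInf (fun a => h a (p a))).
    destruct (sum_nn (fun a => h a (p a))); simpl; try congruence. f_equal; f_equal; ring.
  - simpl in Ev. destruct (obj js p) as [x|] eqn:Ex; [|discriminate].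
    destruct (inner p (H j)) as [y|] eqn:Ey; [|discriminate].
    change (obj_plus (j :: js) p) with (fun a => obj_plus js p a + term_plus j p a).
    change (obj_minus (j :: js) p) with (fun a => obj_minus js p a + term_minus j p a).
    rewrite !sum_nn_add; auto using obj_plus_nonneg, obj_minus_nonneg,
      term_plus_nonneg, term_minus_nonneg.
    unfold term_plus, term_minus.
    rewrite !sum_nn_combination; try apply pos_part_nonneg; try (intros; apply Rmax_r).
    apply (eadd_scaled_difference _ _ _ _ x y v (theta j)); auto using sum_nn_not_MInf.
Qed.

Lemma obj_shift (p p' : A -> R) dI (D : nat -> R) :
  sum_nn (fun a => h a (p' a)) = shift dI (sum_nn (fun a => h a (p a))) ->
  (forall j, inner p' (H j) = option_map (shift (D j)) (inner p (H j))) ->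
  forall js r, obj js p = Some (Fin r) ->
  obj js p' = Some (Fin (r + dI - fold_right (fun j acc => theta j * D j + acc) 0 js)).
Proof.
  intros Hh Hi js. induction js as [|j js IH]; intros r Ev.
  - simpl in *. unfold gen_entropy in *. inversion Ev as [Er]. rewrite Hh, Er. simpl.
    f_equal; f_equal; ring.
  - simpl in Ev |- *. destruct (obj js p) as [x|]; [|discriminate].
    destruct (inner p (H j)) as [y|] eqn:Ey; [|discriminate].
    destruct x as [x0| |]; [| destruct y; simpl in Ev; decide_signs; discriminate
                              | destruct y; simpl in Ev; decide_signs; discriminate].
    rewrite (IH x0 eq_refl), Hi, Ey. simpl.
    destruct y as [y0| |]; simpl in Ev |- *; decide_signs; try discriminate;
      [| replace (theta j) with 0 by lra ..]; inversion Ev; f_equal; f_equal; ring.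
Qed.

End ObjectiveDecomposition.

Section Probabilities.
Context {A : Type}.

Lemma prob_le_1 (p : A -> R) a : is_prob p -> p a <= 1.
Proof.
  intros [_ E]. destruct (sum_nn_Fin_lub p 1 E) as [U _].
  assert (Hs : fsum p (a :: nil) <= 1)
    by (apply U; exists (a :: nil); split; [constructor; [auto| constructor]| reflexivity]).
  simpl in Hs. lra.
Qed.

Lemma prob_range (p : A -> R) a : is_prob p -> 0 <= p a <= 1.
Proof. intros Hp. split; [apply Hp| apply prob_le_1; auto]. Qed.

Lemma prob_pair_le_1 (p : A -> R) a b : is_prob p -> a <> b -> p a + p b <= 1.
Proof.
  intros [_ E] Hab. destruct (sum_nn_Fin_lub p 1 E) as [U _].
  assert (Hs : fsum p (a :: b :: nil) <= 1).
  { apply U; exists (a :: b :: nil); split; [|reflexivity].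
    constructor; [intros [E'|[]]; auto| constructor; [auto| constructor]]. }
  simpl in Hs. lra.
Qed.

Lemma prob_support_nonempty (p : A -> R) : is_prob p -> exists b, 0 < p b.
Proof.
  intros [_ E]. apply NNPP. intros Hn.
  assert (Z : forall b, p b <= 0) by (intros b; apply Rnot_lt_le; intro; apply Hn; eauto).
  destruct (sum_nn_Fin_lub p 1 E) as [_ L].
  enough (1 <= 0) by lra.
  apply L. intros x [l [_ ->]]. induction l as [|a l IH]; simpl; [lra|].
  specialize (Z a). lra.
Qed.

Lemma prob_sum_scal (p : A -> R) c : is_prob p -> 0 <= c -> sum_nn (fun a => c * p a) = Fin c.
Proof.
  intros [_ E] Hc. rewrite sum_nn_scal, E by auto. simpl. f_equal; ring.
Qed.

End Probabilities.
Section Optimality.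
Context {A : Type} (h f : A -> R -> R) (hf : forall a, entropy_fun (h a) (f a))
  (f0 : forall a, finite_limit_at_0 (f a)) (n : nat) (H : nat -> A -> R)
  (theta : nat -> R) (pstar : A -> R) (pstar_prob : is_prob pstar) (r : R)
  (Eobj : objective h n theta H pstar = Some (Fin r)).

Let W (a : A) : R := weighted_H theta H (seq 0 n) a.

Lemma entropy_at_prob_nonneg (p : A -> R) : is_prob p -> forall a, 0 <= h a (p a).
Proof. intros Hp a. apply (entropy_nonneg _ _ (hf a)), prob_range; auto. Qed.

Section Sufficiency.
Variables (alpha : R) (A0 : A -> Prop).
Hypothesis Hout : forall a, ~ A0 a -> f a (pstar a) = - alpha - W a.
Hypothesis Hzero : forall a, A0 a -> pstar a = 0.
Hypothesis Hbound : forall a, A0 a -> f a 0 + W a >= - alpha.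

(** Pointwise, moving from pstar to any q in [0,1] gains at most
    (alpha + W a) (q - pstar a): the tangent inequality at pstar a. *)
Lemma pointwise_gain a q : 0 <= q <= 1 ->
  h a q - h a (pstar a) <= (alpha + W a) * (q - pstar a).
Proof.
  intros Hq. pose proof (prob_range pstar a pstar_prob) as Hs.
  pose proof (tangent _ _ (hf a) (f0 a) q (pstar a) Hs Hq) as T.
  destruct (classic (A0 a)) as [Ha|Ha].
  - pose proof (Hbound a Ha). rewrite (Hzero a Ha) in T |- *. nra.
  - rewrite (Hout a Ha) in T. nra.
Qed.

(** Summing the pointwise gains: pstar maximises the objective. *)
Lemma sufficiency (p : A -> R) : is_prob p ->
  forall v, objective h n theta H p = Some v -> ele v (Fin r).
Proof.
  intros Pp v Ev. rewrite objective_obj in Ev, Eobj.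
  set (c1 := pos_part alpha). set (c2 := pos_part (- alpha)).
  assert (Hc : 0 <= c1 /\ 0 <= c2 /\ c1 - c2 = alpha)
    by (unfold c1, c2; repeat split; auto using pos_part_nonneg, pos_part_sub).
  assert (Rp : forall a, 0 <= p a <= 1) by (intros; apply prob_range; auto).
  assert (Rs : forall a, 0 <= pstar a <= 1) by (intros; apply prob_range; auto).
  assert (Hmass : forall c d, 0 <= c -> 0 <= d ->
            sum_nn (fun a => c * p a + d * pstar a) = Fin (c + d)).
  { intros c d Hc0 Hd0. rewrite (sum_nn_add (fun a => c * p a) (fun a => d * pstar a)),
      !prob_sum_scal by (auto; intros a; specialize (Rp a); specialize (Rs a); nra).
    reflexivity. }
  assert (Hgain : forall a, obj_plus h theta H (seq 0 n) p a + obj_minus theta H (seq 0 n) pstar a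
                   + (c2 * p a + c1 * pstar a)
                   <= obj_plus h theta H (seq 0 n) pstar a + obj_minus theta H (seq 0 n) p a
                   + (c1 * p a + c2 * pstar a)).
  { intros a. pose proof (obj_plus_minus h theta H (seq 0 n) p a).
    pose proof (obj_plus_minus h theta H (seq 0 n) pstar a).
    pose proof (pointwise_gain a (p a) (Rp a)). unfold W in *. nra. }
  assert (Su : sum_nn (fun a => c2 * p a + c1 * pstar a) = Fin (c1 + c2))
    by (rewrite Rplus_comm; apply Hmass; lra).
  refine (diff_of_sums_le _ _ _ _ _ _ (c1 + c2) v r _ _ _ _ _ _ Su
            (Hmass c1 c2 ltac:(lra) ltac:(lra)) Hgain _ _);
    auto using obj_plus_nonneg, obj_minus_nonneg, entropy_at_prob_nonneg, obj_decompose;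
    intros a; specialize (Rp a); specialize (Rs a); nra.
Qed.

End Sufficiency.

Section Necessity.
Hypothesis Hmax : forall p, is_prob p -> forall v, objective h n theta H p = Some v -> ele v (Fin r).
Variables (a b : A) (e : R).
Hypothesis Hab : a <> b.
Hypothesis He : 0 < e < pstar b.

Let transfer : A -> R := fun x =>
  if excluded_middle_informative (x = a) then pstar a + e
  else if excluded_middle_informative (x = b) then pstar b - e else pstar x.

Lemma transfer_a : transfer a = pstar a + e.
Proof. unfold transfer. destruct excluded_middle_informative; tauto. Qed.

Lemma transfer_b : transfer b = pstar b - e.
Proof.
  unfold transfer. destruct excluded_middle_informative; [congruence|].
  destruct excluded_middle_informative; tauto.
Qed.

Lemma transfer_other x : x <> a -> x <> b -> transfer x = pstar x.
Proof. intros Hxa Hxb. unfold transfer. repeat destruct excluded_middle_informative; tauto. Qed.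

(** The transfer stays in [0,1], since e < p*_b and p*_a + p*_b <= 1. *)
Lemma transfer_range x : 0 <= transfer x <= 1.
Proof.
  pose proof (prob_pair_le_1 pstar a b pstar_prob Hab).
  pose proof (prob_range pstar a pstar_prob). pose proof (prob_range pstar b pstar_prob).
  destruct (classic (x = a)) as [->|Ha]; [rewrite transfer_a; lra|].
  destruct (classic (x = b)) as [->|Hb]; [rewrite transfer_b; lra|].
  rewrite transfer_other by auto. apply prob_range; auto.
Qed.

Lemma transfer_sum (c : A -> R -> R) : (forall x v, 0 <= v <= 1 -> 0 <= c x v) ->
  sum_nn (fun x => c x (transfer x)) =
  shift ((c a (pstar a + e) - c a (pstar a)) + (c b (pstar b - e) - c b (pstar b)))
    (sum_nn (fun x => c x (pstar x))).
Proof.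
  intros Hc. rewrite (sum_nn_update2 (fun x => c x (pstar x)) (fun x => c x (transfer x)) a b Hab).
  - rewrite transfer_a, transfer_b. reflexivity.
  - intros x; apply Hc, prob_range; auto.
  - intros x; apply Hc, transfer_range.
  - intros x Hxa Hxb. rewrite transfer_other; auto.
Qed.

Lemma transfer_prob : is_prob transfer.
Proof.
  split; [intros x; apply transfer_range|].
  pose proof (transfer_sum (fun _ v => v)) as Hs. cbv beta in Hs.
  change (sum_nn (fun x => transfer x)) with (sum_nn transfer) in Hs.
  change (sum_nn (fun x => pstar x)) with (sum_nn pstar) in Hs.
  rewrite Hs by (intros; lra). destruct pstar_prob as [_ ->]. simpl. f_equal; ring.
Qed.

Lemma transfer_objective :
  objective h n theta H transfer =
  Some (Fin (r + ((h a (pstar a + e) - h a (pstar a)) + (h b (pstar b - e) - h b (pstar b)))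
            - e * (W a - W b))).
Proof.
  assert (Hi : forall j, inner transfer (H j) =
                 option_map (shift (e * H j a - e * H j b)) (inner pstar (H j))).
  { intros j. unfold inner.
    rewrite (transfer_sum (fun x v => Rmax (v * H j x) 0)),
      (transfer_sum (fun x v => Rmax (- (v * H j x)) 0)) by (intros; apply Rmax_r).
    rewrite eadd_shift. do 2 f_equal.
    pose proof (pos_part_sub ((pstar a + e) * H j a)). pose proof (pos_part_sub (pstar a * H j a)).
    pose proof (pos_part_sub ((pstar b - e) * H j b)). pose proof (pos_part_sub (pstar b * H j b)).
    unfold pos_part in *. lra. }
  rewrite objective_obj in Eobj |- *.
  rewrite (obj_shift h theta H pstar transfer _ _
             (transfer_sum h (fun x v Hv => entropy_nonneg _ _ (hf x) v Hv)) Hi _ r Eobj).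
  rewrite weighted_H_transfer. reflexivity.
Qed.

(** Optimality against the transfer, combined with the tangent inequalities. *)
Lemma transfer_rate : f b (pstar b - e) - f a (pstar a + e) <= W a - W b.
Proof.
  pose proof (Hmax transfer transfer_prob _ transfer_objective) as M. simpl in M.
  pose proof (prob_pair_le_1 pstar a b pstar_prob Hab). pose proof (prob_range pstar a pstar_prob).
  pose proof (tangent _ _ (hf a) (f0 a) (pstar a) (pstar a + e) ltac:(lra) ltac:(lra)) as Ta.
  pose proof (tangent _ _ (hf b) (f0 b) (pstar b) (pstar b - e) ltac:(lra) ltac:(lra)) as Tb.
  apply (Rmult_le_reg_l e); [lra|]. nra.
Qed.

End Necessity.

(** Letting the transferred mass tend to 0: f_a(p_a) + W(a) is minimal on the
    support of pstar. *)
Lemma marginal_order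
  (Hmax : forall p, is_prob p -> forall v, objective h n theta H p = Some v -> ele v (Fin r))
  a b : 0 < pstar b -> f b (pstar b) + W b <= f a (pstar a) + W a.
Proof.
  intros Hb. destruct (classic (a = b)) as [->|Hab]; [lra|].
  pose proof (prob_pair_le_1 pstar a b pstar_prob Hab). pose proof (prob_range pstar a pstar_prob).
  set (D := fun e => 0 < e < pstar b).
  assert (Hfb : limit1_in (fun e => f b (pstar b + -1 * e)) D (f b (pstar b)) 0).
  { apply (limit1_in_sub _ (fun e => 0 < pstar b + -1 * e <= 1)); [unfold D; intros; lra|].
    apply (limit1_in_translate (f b) (fun z => 0 < z <= 1) _ (pstar b) (-1));
      [rewrite Rabs_left by lra; lra|].
    apply (f_continuous _ _ (hf b) (f0 b)), prob_range; auto. }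
  assert (Hfa : limit1_in (fun e => f a (pstar a + 1 * e)) D (f a (pstar a)) 0).
  { apply (limit1_in_sub _ (fun e => 0 < pstar a + 1 * e <= 1)); [unfold D; intros; lra|].
    apply (limit1_in_translate (f a) (fun z => 0 < z <= 1) _ (pstar a) 1); [apply Rabs_R1|].
    apply (f_continuous _ _ (hf a) (f0 a)), prob_range; auto. }
  enough (f b (pstar b) - f a (pstar a) <= W a - W b) by lra.
  apply (limit1_in_le _ D _ 0 _ (adherent_interval 0 (pstar b) 0 Hb ltac:(lra))
           (limit_minus _ _ _ _ _ _ Hfb Hfa)).
  intros e He. replace (pstar b + -1 * e) with (pstar b - e) by ring.
  replace (pstar a + 1 * e) with (pstar a + e) by ring.
  apply transfer_rate; auto.
Qed.

End Optimality.

Theorem theorem2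
  (A : Type)
  (A_countable : exists e : A -> nat, forall x y, e x = e y -> x = y)
  (h f : A -> R -> R)
  (hf : forall a, entropy_fun (h a) (f a))
  (f0_finite : forall a, finite_limit_at_0 (f a))
  (n : nat) (H : nat -> A -> R)
  (H_bdd : forall j, (j < n)%nat -> exists c, forall a, c <= H j a)
  (theta : nat -> R) (pstar : A -> R)
  (pstar_prob : is_prob pstar)
  (obj_finite : exists r, objective h n theta H pstar = Some (Fin r)) :
  variational_principle h n theta H pstar <->
  exists (alpha : R) (A0 : A -> Prop),
    (forall a, ~ A0 a ->
       f a (pstar a) = - alpha - sumj n (fun j => theta j * H j a)) /\
    (forall a, A0 a -> pstar a = 0) /\
    (forall a, A0 a ->
       f a 0 + sumj n (fun j => theta j * H j a) >= - alpha).
Proof.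
  destruct obj_finite as [r E].
  assert (HW : forall a, sumj n (fun j => theta j * H j a) = weighted_H theta H (seq 0 n) a)
    by reflexivity.
  split.
  - intros [_ [r0 [E0 Hmax]]]. rewrite E in E0. injection E0 as <-.
    pose proof (marginal_order h f hf f0_finite n H theta pstar pstar_prob r E Hmax) as Hord.
    destruct (prob_support_nonempty pstar pstar_prob) as [b Hb].
    exists (- (f b (pstar b) + weighted_H theta H (seq 0 n) b)), (fun a => pstar a = 0).
    split; [|split]; auto; intros a Ha; rewrite HW.
    + assert (Ha' : 0 < pstar a) by (pose proof (prob_range pstar a pstar_prob); lra).
      pose proof (Hord a b Hb). pose proof (Hord b a Ha'). lra.
    + pose proof (Hord a b Hb) as Hab. rewrite Ha in Hab. lra.
  - intros [alpha [A0 [Hout [Hzero Hbound]]]]. split; auto. exists r. split; auto.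
    apply (sufficiency h f hf f0_finite n H theta pstar pstar_prob r E alpha A0);
      intros a Ha; [rewrite <- HW| | rewrite <- HW]; auto.
Qed.
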